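(* Let $\alpha>0$ and let $f^+:[0,1]\to[0,1]$ with $f^+(0)=0$. If $ALG(uvw)\le\alpha\,LP(uvw)$ for every $(+,+,+)$-triangle whose edge lengths lie in $[0,1]$ and satisfy the triangle inequalities, then $f^+(x)\le 1-\sqrt{1-\alpha x}$ for every $x\in[0,1]$ with $\alpha x\le 1$.
   Context: A triangle $uvw$ has pairs $uv,vw,uw$, all positive edges in a $(+,+,+)$-triangle, with lengths $x_e\in[0,1]$; triangle inequalities: each length is at most the sum of the other two. Let $p_e=f^+(x_e)$. For a pair $(u,v)$ with third vertex $w$: $e.cost_w(u,v)=p_{uw}(1-p_{vw})+(1-p_{uw})p_{vw}$ and $e.lp_w(u,v)=(1-p_{uw}p_{vw})x_{uv}$. $ALG(uvw)=e.cost_w(u,v)+e.cost_v(w,u)+e.cost_u(v,w)$, $LP(uvw)=e.lp_w(u,v)+e.lp_v(w,u)+e.lp_u(v,w)$. *)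

From HB Require Import structures.
From mathcomp Require Import all_boot all_order all_algebra.
Set Implicit Arguments. Unset Strict Implicit. Unset Printing Implicit Defensive.
Import Order.TTheory GRing.Theory Num.Theory.
Local Open Scope ring_scope.

(* e.cost_w(u,v) = p_uw (1 - p_vw) + (1 - p_uw) p_vw,
   called as ecost p_uw p_vw. *)
Definition ecost (R : numDomainType) (p1 p2 : R) : R :=
  p1 * (1 - p2) + (1 - p1) * p2.

(* e.lp_w(u,v) = (1 - p_uw p_vw) x_uv, called as elp x_uv p_uw p_vw. *)
Definition elp (R : numDomainType) (x p1 p2 : R) : R :=
  (1 - p1 * p2) * x.

(* Triangle uvw with x_uv = a, x_vw = b, x_uw = c, and p_e = f x_e. *)
Definition ALG (R : numDomainType) (f : R -> R) (a b c : R) : R :=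
  ecost (f c) (f b)   (* e.cost_w(u,v): p_uw, p_vw *)
  + ecost (f b) (f a) (* e.cost_v(w,u): p_wv, p_uv *)
  + ecost (f a) (f c). (* e.cost_u(v,w): p_vu, p_wu *)

Definition LP (R : numDomainType) (f : R -> R) (a b c : R) : R :=
  elp a (f c) (f b)   (* e.lp_w(u,v) = (1 - p_uw p_vw) x_uv *)
  + elp c (f b) (f a) (* e.lp_v(w,u) = (1 - p_wv p_uv) x_wu *)
  + elp b (f a) (f c). (* e.lp_u(v,w) = (1 - p_vu p_wu) x_vw *)

Definition in01 (R : numDomainType) (x : R) : Prop := 0 <= x <= 1.

Definition triangle_ok (R : numDomainType) (a b c : R) : Prop :=
  in01 a /\ in01 b /\ in01 c /\ a <= b + c /\ b <= a + c /\ c <= a + b.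

From HB Require Import structures.
From mathcomp Require Import all_boot all_order all_algebra.
From mathcomp Require Import ring.
Import Order.TTheory GRing.Theory Num.Theory.
Local Open Scope ring_scope.

(* The degenerate triangle with edge lengths x, x, 0 suffices: as f 0 = 0,
   with p := f x the hypothesis reads 2 (1 - (1 - p)^2) <= alpha * 2 x,
   i.e. 1 - alpha x <= (1 - p)^2, and taking square roots (1 - p >= 0) gives
   the bound. *)

Lemma triangle_ok_degenerate {R : numDomainType} (x : R) :
  in01 x -> triangle_ok x x 0.
Proof.
move=> /andP[x_ge0 x_le1].
by rewrite /triangle_ok /in01 lexx ler01 addr0 x_ge0 x_le1 addr_ge0.
Qed.

Lemma ALG_degenerate {R : numDomainType} (f : R -> R) (x : R) :
  f 0 = 0 -> ALG f x x 0 = 2 * (1 - (1 - f x) ^+ 2).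
Proof. by move=> f0; rewrite /ALG /ecost f0; ring. Qed.

Lemma LP_degenerate {R : numDomainType} (f : R -> R) (x : R) :
  f 0 = 0 -> LP f x x 0 = 2 * x.
Proof. by move=> f0; rewrite /LP /elp f0; ring. Qed.

Lemma ler_sub_sqrt {R : rcfType} (p s : R) :
  p <= 1 -> s <= (1 - p) ^+ 2 -> p <= 1 - Num.sqrt s.
Proof.
move=> p_le1 s_le; have q_ge0 : 0 <= 1 - p by rewrite subr_ge0.
rewrite lerBrDl -lerBrDr -(ger0_norm q_ge0) -sqrtr_sqr.
by rewrite ler_sqrt // sqr_ge0.
Qed.

Theorem lemma5 (R : rcfType) (alpha : R) (f : R -> R)
  (halpha : 0 < alpha)
  (hf01 : forall x : R, in01 x -> in01 (f x))
  (hf0 : f 0 = 0)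
  (hALG : forall a b c : R, triangle_ok a b c ->
            ALG f a b c <= alpha * LP f a b c) :
  forall x : R, in01 x -> alpha * x <= 1 ->
    f x <= 1 - Num.sqrt (1 - alpha * x).
Proof.
move=> x x01 _; have /andP[_ fx_le1] := hf01 x x01.
apply: ler_sub_sqrt => //.
have := hALG _ _ _ (triangle_ok_degenerate x x01).
rewrite ALG_degenerate // LP_degenerate // mulrCA ler_pM2l //.
by rewrite !lerBlDr addrC.
Qed.
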